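(* Let $\hat A,\hat B,\hat C,\hat D$ be matrices with entries in $NCFD$ of sizes $k\times m$, $p\times s$, $m\times n$, $s\times r$ respectively. Then $$(\hat A\otimes\hat B)\odot(\hat C\otimes\hat D)=(\hat A\odot\hat C)\otimes(\hat B\odot\hat D).$$
   Context: $NCFD$ is the set of normal convex type-1 fuzzy sets $\mu:[0,1]\to[0,1]$ ($\max_u\mu(u)=1$, and $\mu(u_j)\ge\min\{\mu(u_i),\mu(u_k)\}$ for $u_i\le u_j\le u_k$). Operations: $(\mu_1\sqcup\mu_2)(v)=\sup\{\min(\mu_1(u),\mu_2(w)):\max(u,w)=v\}$, $(\mu_1\sqcap\mu_2)(v)=\sup\{\min(\mu_1(u),\mu_2(w)):\min(u,w)=v\}$. For matrices $R$ ($a\times b$) and $S$ ($b\times c$) with entries in $NCFD$, $R\odot S$ is the $a\times c$ matrix $(R\odot S)(x,z)=\bigsqcup_{y=1}^{b}[R(x,y)\sqcap S(y,z)]$. For $\hat A=[\tilde a_{ij}]$ ($k\times m$) and $\hat B=[\tilde b_{pq}]$ ($p\times s$), the bi-fuzzy tensor $\hat A\otimes\hat B$ is the $kp\times ms$ block matrix whose $(i,j)$ block is $\tilde a_{ij}\sqcap\hat B:=[\tilde a_{ij}\sqcap\tilde b_{pq}]_{p,q}$. *)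

From mathcomp Require Import all_boot all_order all_algebra.
From mathcomp Require Import boolp classical_sets reals.
Set Implicit Arguments. Unset Strict Implicit. Unset Printing Implicit Defensive.
Import Order.TTheory GRing.Theory Num.Theory.
Local Open Scope ring_scope.
Local Open Scope classical_set_scope.

Section Fuzzy.
Variable R : realType.

(* type-1 fuzzy sets on [0,1]: functions R -> R, only values on [0,1] matter *)
Definition fz := R -> R.

Definition in01 (u : R) := (0 <= u) && (u <= 1).

Definition NCFD (mu : fz) : Prop :=
  (forall u, in01 u -> in01 (mu u)) /\
  (exists u, in01 u /\ mu u = 1 /\ forall u', in01 u' -> mu u' <= 1) /\
  (forall ui uj uk, in01 ui -> in01 uj -> in01 uk -> ui <= uj <= uk ->
     Num.min (mu ui) (mu uk) <= mu uj).

Definition fjoin (mu1 mu2 : fz) : fz := fun v =>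
  sup [set t | exists u w, [/\ in01 u, in01 w, Num.max u w = v &
                                 t = Num.min (mu1 u) (mu2 w)]].

Definition fmeet (mu1 mu2 : fz) : fz := fun v =>
  sup [set t | exists u w, [/\ in01 u, in01 w, Num.min u w = v &
                                 t = Num.min (mu1 u) (mu2 w)]].

Definition fzero : fz := fun v => if v == 0 then 1 else 0.

Definition fmxmul a b c (M : 'M[fz]_(a, b)) (N : 'M[fz]_(b, c)) : 'M[fz]_(a, c) :=
  \matrix_(x, z) \big[fjoin/fzero]_(y < b) fmeet (M x y) (N y z).

(* inverse of mxvec_index: row index i*p + i' |-> (i, i') *)
Definition kidx k p (a : 'I_(k * p)) : 'I_k * 'I_p :=
  enum_val (cast_ord (esym (mxvec_cast k p)) a).

(* bi-fuzzy tensor: block (i,j) is  a_ij meet B *)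
Definition ftens k m p s (A : 'M[fz]_(k, m)) (B : 'M[fz]_(p, s))
  : 'M[fz]_(k * p, m * s) :=
  \matrix_(a, b) fmeet (A (kidx a).1 (kidx b).1) (B (kidx a).2 (kidx b).2).

Definition NCFD_mx a b (M : 'M[fz]_(a, b)) : Prop := forall i j, NCFD (M i j).

End Fuzzy.

(* Two fuzzy sets with values in [0,1], both vanishing outside [0,1], coincide
   once all their strict level cuts {v in [0,1] | th < mu v}, 0 <= th < 1,
   coincide.  Cuts turn meet and join into the pointwise min and max images of
   sets of reals, and the cuts of normal convex fuzzy sets are nonempty
   order-convex subsets of [0,1].  On such sets min distributes over max
   (convexity is essential here), and {0} is neutral for max and absorbing for
   min, so the cut of an entry of the left-hand side, a join over pairs (j, j')
   of meets, expands as the meet of two joins exactly like a product of two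
   finite sums. *)

From HB Require Import structures.
From mathcomp Require Import all_boot all_order all_algebra.
From mathcomp Require Import boolp classical_sets reals.
Set Implicit Arguments. Unset Strict Implicit. Unset Printing Implicit Defensive.
Import Order.TTheory GRing.Theory Num.Theory.
Local Open Scope ring_scope.
Local Open Scope classical_set_scope.

Section Image2.
Context {T : Type}.
Implicit Types (op : T -> T -> T) (P Q S U : set T).

Lemma image2C op P Q : commutative op -> image2 P Q op = image2 Q P op.
Proof.
by move=> opC; apply/seteqP; split=> _ [x Px [y Qy <-]]; exists y => //; exists x.
Qed.

Lemma image2A op P Q S : associative op ->
  image2 P (image2 Q S op) op = image2 (image2 P Q op) S op.
Proof.
move=> opA; apply/seteqP; split.
  move=> _ [x Px [_ [y Qy [z Sz <-]] <-]].
  by exists (op x y); [exists x => //; exists y | exists z; rewrite ?opA].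
move=> _ [_ [x Px [y Qy <-]] [z Sz <-]].
by exists x => //; exists (op y z); [exists y => //; exists z | rewrite opA].
Qed.

Lemma image2ACA op P Q S U : interchange op op ->
  image2 (image2 P Q op) (image2 S U op) op =
  image2 (image2 P S op) (image2 Q U op) op.
Proof.
move=> opACA; apply/seteqP; split=> _ [_ [a Pa [b Qb <-]] [_ [c Sc [e Ue <-]] <-]].
  by exists (op a c); [exists a => //; exists c | exists (op b e);
    [exists b => //; exists e | rewrite opACA]].
by exists (op a c); [exists a => //; exists c | exists (op b e);
  [exists b => //; exists e | rewrite opACA]].
Qed.

End Image2.

Section OrderImages.
Context {d : Order.disp_t} {T : orderType d}.
Local Open Scope order_scope.
Import Order.Def.
Implicit Types (P Q S : set T) (a b c : T).

Definition min_image P Q : set T := image2 P Q Order.min.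
Definition max_image P Q : set T := image2 P Q Order.max.

Definition order_convex S := forall a b c, S a -> S c -> a <= b <= c -> S b.

Lemma min_imageC P Q : min_image P Q = min_image Q P.
Proof. exact/image2C/minC. Qed.

Lemma max_imageC P Q : max_image P Q = max_image Q P.
Proof. exact/image2C/maxC. Qed.

Lemma order_convex_min_image P Q :
  order_convex P -> order_convex Q -> order_convex (min_image P Q).
Proof.
move=> + + _ v _ [a Pa [b Qb <-]] [a' Pa' [b' Qb' <-]] /andP[].
wlog ab : P Q a b a' b' Pa Qb Pa' Qb' / a <= b.
  move=> W; case/orP: (le_total a b) => [|ba]; first exact: W.
  move=> cP cQ; rewrite min_imageC (minC a) (minC a').
  exact: W.
move=> cP _; rewrite (min_l ab) le_min => av /andP[va' vb'].
exists v; first by apply: (cP a v a') => //; rewrite av va'.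
by exists b' => //; rewrite min_l.
Qed.

Lemma order_convex_max_image P Q :
  order_convex P -> order_convex Q -> order_convex (max_image P Q).
Proof.
move=> + + _ v _ [a Pa [b Qb <-]] [a' Pa' [b' Qb' <-]] /andP[].
wlog ba : P Q a b a' b' Pa Qb Pa' Qb' / b' <= a'.
  move=> W; case/orP: (le_total b' a') => [|ab]; first exact: W.
  move=> cP cQ; rewrite max_imageC (maxC a) (maxC a').
  exact: W.
move=> cP _; rewrite (max_l ba) ge_max => /andP[av bv] va'.
exists v; first by apply: (cP a v a') => //; rewrite av va'.
by exists b => //; rewrite max_l.
Qed.

Lemma min_image_maxDr P Q1 Q2 : order_convex P ->
  min_image P (max_image Q1 Q2) = max_image (min_image P Q1) (min_image P Q2).
Proof.
move=> cP; apply/seteqP; split=> [_ [a Pa [_ [b1 Qb1 [b2 Qb2 <-]]] <-]|].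
  rewrite min_maxr; exists (min a b1); first by exists a => //; exists b1.
  by exists (min a b2) => //; exists a => //; exists b2.
move=> _ [_ [a1 Pa1 [b1 Qb1 <-]] [_ [a2 Pa2 [b2 Qb2 <-]] <-]].
wlog le21 : Q1 Q2 a1 a2 b1 b2 Pa1 Pa2 Qb1 Qb2 / min a2 b2 <= min a1 b1.
  move=> W; case/orP: (le_total (min a2 b2) (min a1 b1)) => [|le12]; first exact: W.
  by rewrite max_imageC maxC; apply: W.
rewrite (max_l le21).
suff [x Px ->] : exists2 x, P x & min a1 b1 = min x (max b1 b2).
  by exists x => //; exists (max b1 b2) => //; exists b1 => //; exists b2.
have [b21|b12] := leP b2 b1; first by exists a1.
have [a1b1|b1a1] := leP a1 b1.
  by exists a1; rewrite // min_l // (le_trans a1b1 (ltW b12)).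
exists b1; last by rewrite min_l // ltW.
apply: (cP a2 b1 a1) => //; rewrite (ltW b1a1) andbT.
by move: le21; rewrite (min_r (ltW b1a1)) ge_min [b2 <= _]leNgt b12 orbF.
Qed.

Lemma max_image1l x0 P : P `<=` [set x | x0 <= x] -> max_image [set x0] P = P.
Proof.
move=> P_ge; apply/seteqP; split=> [_ [_ -> [x Px <-]]|x Px].
  by rewrite max_r // P_ge.
by exists x0 => //; exists x => //; rewrite max_r // P_ge.
Qed.

Lemma min_image1l x0 P : P !=set0 -> P `<=` [set x | x0 <= x] ->
  min_image [set x0] P = [set x0].
Proof.
move=> [x Px] P_ge; apply/seteqP; split=> [_ [_ -> [y Py <-]]|_ ->].
  by rewrite min_l // P_ge.
by exists x0 => //; exists x => //; rewrite min_l // P_ge.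
Qed.

End OrderImages.

Section IntervalsAbove.
Context {d : Order.disp_t} {T : orderType d} (x0 : T).
Local Open Scope order_scope.
Implicit Types (P Q : set T).

Definition interval_above P :=
  [/\ P !=set0, P `<=` [set x | x0 <= x] & order_convex P].

Record itv_above := ItvAbove { itv_set :> set T; itv_setP : interval_above itv_set }.

Lemma itv_above_inj (I J : itv_above) : I = J :> set T -> I = J.
Proof.
case: I J => [P hP] [Q hQ] /= PQ; subst Q.
by rewrite (Prop_irrelevance hP hQ).
Qed.

Lemma interval_above1 : interval_above [set x0].
Proof.
split=> [|x ->|a b c -> -> /andP[x0b bx0]]; first by exists x0.
  exact: lexx.
exact/le_anti/andP.
Qed.

Lemma interval_above_min_image P Q :
  interval_above P -> interval_above Q -> interval_above (min_image P Q).
Proof.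
case=> [[p Pp] P_ge cP] [[q Qq] Q_ge cQ]; split.
- by exists (Order.min p q); exists p => //; exists q.
- by move=> _ [a /P_ge a_ge [b /Q_ge b_ge <-]]; rewrite /= le_min a_ge.
- exact: order_convex_min_image.
Qed.

Lemma interval_above_max_image P Q :
  interval_above P -> interval_above Q -> interval_above (max_image P Q).
Proof.
case=> [[p Pp] P_ge cP] [[q Qq] Q_ge cQ]; split.
- by exists (Order.max p q); exists p => //; exists q.
- by move=> _ [a /P_ge a_ge [b _ <-]]; rewrite /= le_max a_ge.
- exact: order_convex_max_image.
Qed.

Definition itv0 := ItvAbove interval_above1.
Definition itv_min (I J : itv_above) :=
  ItvAbove (interval_above_min_image (itv_setP I) (itv_setP J)).
Definition itv_max (I J : itv_above) :=
  ItvAbove (interval_above_max_image (itv_setP I) (itv_setP J)).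

Lemma itv_maxA : associative itv_max.
Proof. by move=> I J K; apply/itv_above_inj/image2A/maxA. Qed.

Lemma itv_maxC : commutative itv_max.
Proof. by move=> I J; apply/itv_above_inj/max_imageC. Qed.

Lemma itv_max0l : left_id itv0 itv_max.
Proof. by move=> I; apply/itv_above_inj/max_image1l; case: (itv_setP I). Qed.

Lemma itv_minC : commutative itv_min.
Proof. by move=> I J; apply/itv_above_inj/min_imageC. Qed.

Lemma itv_min0l : left_zero itv0 itv_min.
Proof. by move=> I; apply/itv_above_inj/min_image1l; case: (itv_setP I). Qed.

Lemma itv_min0r : right_zero itv0 itv_min.
Proof. by move=> I; rewrite itv_minC itv_min0l. Qed.

Lemma itv_minDr : right_distributive itv_min itv_max.
Proof. by move=> I J K; apply/itv_above_inj/min_image_maxDr; case: (itv_setP I). Qed.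

Lemma itv_minDl : left_distributive itv_min itv_max.
Proof. by move=> I J K; rewrite !(itv_minC _ K) itv_minDr. Qed.

HB.instance Definition _ := Monoid.isComLaw.Build itv_above itv0 itv_max
  itv_maxA itv_maxC itv_max0l.
HB.instance Definition _ := Monoid.isMulLaw.Build itv_above itv0 itv_min
  itv_min0l itv_min0r.
HB.instance Definition _ := Monoid.isAddLaw.Build itv_above itv_min itv_max
  itv_minDl itv_minDr.

Lemma itv_set_big_max I r (P : pred I) (F : I -> itv_above) :
  \big[itv_max/itv0]_(i <- r | P i) F i =
  \big[max_image/[set x0]]_(i <- r | P i) F i :> set T.
Proof. exact: (big_morph itv_set (fun _ _ => erefl) erefl). Qed.

Lemma big_max_image_pairs (K I J : finType) (h : K -> I * J)
    (P : I -> set T) (Q : J -> set T) : bijective h ->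
    (forall i, interval_above (P i)) -> (forall j, interval_above (Q j)) ->
  \big[max_image/[set x0]]_k min_image (P (h k).1) (Q (h k).2) =
  min_image (\big[max_image/[set x0]]_i P i) (\big[max_image/[set x0]]_j Q j).
Proof.
move=> h_bij hP hQ; pose PI i := ItvAbove (hP i); pose QI j := ItvAbove (hQ j).
transitivity (itv_set (\big[itv_max/itv0]_k itv_min (PI (h k).1) (QI (h k).2))).
  by rewrite itv_set_big_max.
transitivity
  (itv_set (itv_min (\big[itv_max/itv0]_i PI i) (\big[itv_max/itv0]_j QI j))).
  by rewrite big_distrlr pair_bigA (reindex h) //; exact: onW_bij.
by rewrite /= !itv_set_big_max.
Qed.

End IntervalsAbove.

Lemma kidx_bij k p : bijective (@kidx k p).
Proof.
exists (fun ij => cast_ord (mxvec_cast k p) (enum_rank ij)) => a.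
  by rewrite /kidx enum_valK cast_ordKV.
by rewrite /kidx cast_ordK enum_rankK.
Qed.

Section StrictCuts.
Variable R : realType.
Implicit Types (f g h k : fz R) (th : R).

Definition fz01 f := forall u, in01 u -> in01 (f u).

Definition strict_cut th f : set R := [set v | in01 v /\ th < f v].

(* [fmeet] and [fjoin] unfold to [zadeh Num.min] and [zadeh Num.max]. *)
Definition zadeh (op : R -> R -> R) f g : fz R := fun v =>
  sup [set t | exists u w, [/\ in01 u, in01 w, op u w = v &
                                t = Num.min (f u) (g w)]].

Lemma in01_min (a b : R) : in01 a -> in01 b -> in01 (Num.min a b).
Proof. by move=> /andP[a0 a1] /andP[b0 b1]; rewrite /in01 le_min ge_min a0 b0 a1. Qed.

Lemma in01_max (a b : R) : in01 a -> in01 b -> in01 (Num.max a b).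
Proof. by move=> /andP[a0 a1] /andP[b0 b1]; rewrite /in01 le_max ge_max a0 a1 b1. Qed.

Lemma in01_sup (S : set R) : S `<=` [set x | in01 x] -> in01 (sup S).
Proof.
move=> S01; have [[t St]|S0] := pselect (S !=set0); last first.
  by rewrite sup_out; [rewrite /in01 lexx ler01 | case].
have ubS : has_ubound S by exists 1 => x /S01 /andP[].
have /andP[t0 _] := S01 t St.
rewrite /in01 (le_trans t0 (ub_le_sup ubS St)).
by apply: ge_sup; [exists t | move=> x /S01 /andP[]].
Qed.

Section Zadeh.
Variable op : R -> R -> R.
Hypothesis op01 : forall u w, in01 u -> in01 w -> in01 (op u w).

Lemma zadeh_in01 f g v : fz01 f -> fz01 g -> in01 (zadeh op f g v).
Proof.
move=> f01 g01; apply: in01_sup => _ [u [w [u01 w01 _ ->]]].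
by apply: in01_min; [apply: f01 | apply: g01].
Qed.

Lemma zadeh_out f g v : ~~ in01 v -> zadeh op f g v = 0.
Proof.
move=> v01; rewrite /zadeh (_ : [set t | _] = set0) ?sup0 //.
by apply/seteqP; split=> // t [u [w [u01 w01 uwv _]]]; move: v01; rewrite -uwv op01.
Qed.

Lemma strict_cut_zadeh f g th : fz01 f -> 0 <= th ->
  strict_cut th (zadeh op f g) = image2 (strict_cut th f) (strict_cut th g) op.
Proof.
move=> f01 th0; apply/seteqP; split=> [v [v01]|_ [u [u01 fu] [w [w01 gw] <-]]].
  rewrite /zadeh; set S := [set t | _] => th_lt.
  have [t [u [w [u01 w01 uwv tE]]] th_t] : exists2 t, S t & th < t.
    have [S0|S0] := pselect (S !=set0); first exact: sup_gt.
    by move: th_lt; rewrite sup_out ?ltNge ?th0 //; case.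
  move: th_t; rewrite tE lt_min => /andP[fu gw].
  by exists u => //; exists w.
split; first exact: op01.
rewrite /zadeh; set S := [set t | _].
have ubS : has_ubound S.
  exists 1 => _ [u' [w' [u'01 _ _ ->]]].
  by rewrite ge_min; case/andP: (f01 u' u'01) => _ ->.
have S_fg : S (Num.min (f u) (g w)) by exists u, w.
by apply: lt_le_trans (ub_le_sup ubS S_fg); rewrite lt_min fu gw.
Qed.

End Zadeh.

Lemma fz01_fmeet f g : fz01 f -> fz01 g -> fz01 (fmeet f g).
Proof. by move=> f01 g01 v _; apply: zadeh_in01. Qed.

Lemma fz01_fjoin f g : fz01 f -> fz01 g -> fz01 (fjoin f g).
Proof. by move=> f01 g01 v _; apply: zadeh_in01. Qed.

Lemma strict_cut_fmeet f g th : fz01 f -> 0 <= th ->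
  strict_cut th (fmeet f g) = min_image (strict_cut th f) (strict_cut th g).
Proof. by move=> f01 th0; rewrite (strict_cut_zadeh in01_min). Qed.

Lemma strict_cut_fjoin f g th : fz01 f -> 0 <= th ->
  strict_cut th (fjoin f g) = max_image (strict_cut th f) (strict_cut th g).
Proof. by move=> f01 th0; rewrite (strict_cut_zadeh in01_max). Qed.

Lemma strict_cut_fmeet_interchange f g h k th : fz01 f -> fz01 g -> fz01 h ->
  0 <= th -> strict_cut th (fmeet (fmeet f g) (fmeet h k)) =
             min_image (strict_cut th (fmeet f h)) (strict_cut th (fmeet g k)).
Proof.
move=> f01 g01 h01 th0; have fg01 := fz01_fmeet f01 g01.
by rewrite !strict_cut_fmeet //; apply/image2ACA/minACA.
Qed.

Lemma fz01_fzero : fz01 (@fzero R).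
Proof. by move=> v _; rewrite /fzero; case: eqP; rewrite /in01 lexx ler01. Qed.

Lemma fzero_out v : ~~ in01 v -> @fzero R v = 0.
Proof. by rewrite /fzero; case: eqP => // ->; rewrite /in01 lexx ler01. Qed.

Lemma strict_cut_fzero th : 0 <= th < 1 -> strict_cut th (@fzero R) = [set 0].
Proof.
case/andP=> th0 th1; apply/seteqP; split=> [v [_]|_ ->].
  by rewrite /fzero; case: eqP => // _; rewrite ltNge th0.
by split; rewrite /fzero ?eqxx /in01 ?lexx ?ler01.
Qed.

Section BigJoin.
Variables (I : Type) (r : seq I) (P : pred I) (F : I -> fz R).
Let bigF := \big[@fjoin R/@fzero R]_(i <- r | P i) F i.

Lemma fz01_bigjoin : (forall i, P i -> fz01 (F i)) -> fz01 bigF.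
Proof.
move=> F01; apply: big_ind => //; first exact: fz01_fzero.
exact: fz01_fjoin.
Qed.

Lemma bigjoin_out v : ~~ in01 v -> bigF v = 0.
Proof.
move=> v01; apply: (big_rec (fun f => f v = 0)); first exact: fzero_out.
by move=> i f _ _; apply: zadeh_out in01_max _ _ _ v01.
Qed.

Lemma strict_cut_bigjoin th : 0 <= th < 1 -> (forall i, P i -> fz01 (F i)) ->
  strict_cut th bigF = \big[max_image/[set 0]]_(i <- r | P i) strict_cut th (F i).
Proof.
move=> th01 F01; apply: (big_rec2 (fun f S => strict_cut th f = S)).
  exact: strict_cut_fzero.
move=> i f _ Pi <-; apply: strict_cut_fjoin (F01 i Pi) _.
by case/andP: th01.
Qed.

End BigJoin.

Lemma interval_above_strict_cut f th : NCFD f -> 0 <= th < 1 ->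
  interval_above 0 (strict_cut th f).
Proof.
case=> _ [[u [u01 [fu1 _]]] f_cvx] /andP[th0 th1]; split.
- by exists u; split; rewrite ?fu1.
- by move=> v [/andP[]].
move=> a b c [a01 fa] [c01 fc] /andP[ab bc].
have b01 : in01 b.
  case/andP: a01 => a0 _; case/andP: c01 => _ c1.
  by rewrite /in01 (le_trans a0 ab) (le_trans bc c1).
split=> //; apply: lt_le_trans (f_cvx a b c a01 b01 c01 _); last by rewrite ab bc.
by rewrite lt_min fa fc.
Qed.

Lemma NCFD_fz01 f : NCFD f -> fz01 f.
Proof. by case. Qed.

Lemma interval_above_strict_cut_fmeet f g th : NCFD f -> NCFD g -> 0 <= th < 1 ->
  interval_above 0 (strict_cut th (fmeet f g)).
Proof.
move=> nf ng th01; have th0 : 0 <= th by case/andP: th01.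
rewrite strict_cut_fmeet //; last exact: NCFD_fz01.
by apply: interval_above_min_image; apply: interval_above_strict_cut.
Qed.

Lemma eq_fz_strict_cut f g : fz01 f -> fz01 g ->
  (forall v, ~~ in01 v -> f v = g v) ->
  (forall th, 0 <= th < 1 -> strict_cut th f = strict_cut th g) -> f = g.
Proof.
move=> f01 g01 fg_out fg_cut; apply: funext => v.
have [v01|] := boolP (in01 v); last exact: fg_out.
suff le_cut f1 f2 : fz01 f1 -> fz01 f2 ->
    (forall th, 0 <= th < 1 -> strict_cut th f1 = strict_cut th f2) -> f1 v <= f2 v.
  by apply/le_anti; rewrite !le_cut // => th /fg_cut.
move=> f1_01 f2_01 cut12; rewrite leNgt; apply/negP => lt21.
have /andP[f2v0 _] := f2_01 v v01; have /andP[_ f1v1] := f1_01 v v01.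
have : strict_cut (f2 v) f1 v by [].
by rewrite cut12 ?f2v0 ?(lt_le_trans lt21 f1v1) // => -[_]; rewrite ltxx.
Qed.

End StrictCuts.

Theorem lemma1 (R : realType) (k m p s n r : nat)
  (A : 'M[fz R]_(k, m)) (B : 'M[fz R]_(p, s))
  (C : 'M[fz R]_(m, n)) (D : 'M[fz R]_(s, r)) :
  NCFD_mx A -> NCFD_mx B -> NCFD_mx C -> NCFD_mx D ->
  fmxmul (ftens A B) (ftens C D) = ftens (fmxmul A C) (fmxmul B D).
Proof.
move=> nA nB nC nD; apply/matrixP => x z; rewrite !mxE.
under eq_bigr do rewrite !mxE.
set i := (kidx x).1; set i' := (kidx x).2; set j := (kidx z).1; set j' := (kidx z).2.
have fzA u w : fz01 (A u w) := NCFD_fz01 (nA u w).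
have fzB u w : fz01 (B u w) := NCFD_fz01 (nB u w).
have fzC u w : fz01 (C u w) := NCFD_fz01 (nC u w).
have fzD u w : fz01 (D u w) := NCFD_fz01 (nD u w).
have fz01_summand y : fz01 (fmeet (fmeet (A i (kidx y).1) (B i' (kidx y).2))
                                 (fmeet (C (kidx y).1 j) (D (kidx y).2 j'))).
  by do 2!apply: fz01_fmeet.
apply: eq_fz_strict_cut => [||v v01|th th01].
- exact: fz01_bigjoin.
- by apply: fz01_fmeet; apply: fz01_bigjoin => l _; apply: fz01_fmeet.
- by rewrite bigjoin_out //; apply/esym/(zadeh_out (@in01_min R)).
have th0 : 0 <= th by case/andP: th01.
rewrite strict_cut_fmeet //; last by apply: fz01_bigjoin => l _; apply: fz01_fmeet.
rewrite !strict_cut_bigjoin // => [|l _|l _]; try exact: fz01_fmeet.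
under eq_bigr do
  rewrite (strict_cut_fmeet_interchange _ (fzA _ _) (fzB _ _) (fzC _ _) th0).
apply: (big_max_image_pairs (kidx_bij _ _)) => l;
  exact: interval_above_strict_cut_fmeet.
Qed.
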